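(* Let $\beta=\beta(\alpha)$ be a real function of $\alpha$ such that $c(\alpha)=\alpha-\beta(\alpha)$ satisfies $-1<c(\alpha)\le M$ for some constant $M$ and all large $\alpha$. Then, as $\alpha\to\infty$, \[ I(\alpha,\beta)\sim\left(\frac{6}{\alpha}\right)^{\frac{\alpha-\beta+1}{2}}\Gamma\!\left(\frac{\alpha-\beta+1}{2}\right), \] i.e. the ratio of the two sides tends to $1$. In particular, \[ I(\alpha,[\alpha])\sim\left(\frac{6}{\alpha}\right)^{\frac{\alpha-[\alpha]+1}{2}}\Gamma\!\left(\frac{\alpha-[\alpha]+1}{2}\right),\qquad \alpha\to\infty, \] where $[\alpha]$ denotes the greatest integer not exceeding $\alpha$.
   Context: For real $\alpha,\beta$ with $\alpha>\beta-1>0$, $I(\alpha,\beta)=\int_{-\infty}^{\infty}|\sin t|^{\alpha}|t|^{-\beta}\,dt$; $\Gamma$ denotes the gamma function. *)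

From Stdlib Require Import Reals Lra ClassicalEpsilon.
Open Scope R_scope.

(* Real power x^y for x >= 0, with the convention 0^y := 0 (only affects
   isolated points, irrelevant for the integrals below). *)
Definition powR (x y : R) : R := if Rle_dec x 0 then 0 else Rpower x y.

Definition ImpIntRight (f : R -> R) (a l : R) : Prop :=
  (forall x y, a < x -> x <= y -> exists _ : Riemann_integrable f x y, True) /\
  (forall eps, 0 < eps -> exists delta K, 0 < delta /\
     forall x y, a < x -> x < a + delta -> K < y ->
       exists pr : Riemann_integrable f x y, Rabs (RiemannInt pr - l) < eps).

Definition ImpIntLeft (f : R -> R) (a l : R) : Prop :=
  (forall x y, x <= y -> y < a -> exists _ : Riemann_integrable f x y, True) /\
  (forall eps, 0 < eps -> exists delta K, 0 < delta /\
     forall x y, y < a -> a - delta < y -> x < K ->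
       exists pr : Riemann_integrable f x y, Rabs (RiemannInt pr - l) < eps).

(* Improper integral over the whole line, split at the (possibly singular)
   point 0: int_{-oo}^{oo} f = int_{-oo}^0 f + int_0^{oo} f. *)
Definition ImpIntLine (f : R -> R) (l : R) : Prop :=
  exists l1 l2, ImpIntLeft f 0 l1 /\ ImpIntRight f 0 l2 /\ l = l1 + l2.

(* Gamma(s) = int_0^oo t^(s-1) e^(-t) dt  (meaningful for s > 0). *)
Definition Gamma (s : R) : R :=
  epsilon (inhabits 0)
    (fun l => ImpIntRight (fun t => powR t (s - 1) * exp (- t)) 0 l).

(* I(alpha,beta) = int_{-oo}^{oo} |sin t|^alpha |t|^(-beta) dt
   (meaningful for alpha > beta - 1 > 0). *)
Definition I_int (alpha beta : R) : R :=
  epsilon (inhabits 0)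
    (fun l => ImpIntLine (fun t => powR (Rabs (sin t)) alpha * powR (Rabs t) (- beta)) l).

Definition equiv_at_infty (f g : R -> R) : Prop :=
  forall eps, 0 < eps -> exists A, forall alpha, A < alpha ->
    Rabs (f alpha / g alpha - 1) < eps.

From Stdlib Require Import Reals Lra Psatz Factorial ClassicalEpsilon Classical.
From Coquelicot Require Import Coquelicot.
Open Scope R_scope.

(* Write c = alpha - beta, s = (c + 1) / 2, k = alpha / 6 and w = alpha^(1/3).
   Near 0, sin t / t = exp (- t^2/6 + O(t^4)), so on (0, 1/w] the integrand is
   t^c exp (- k t^2) up to a factor exp (O (1/w)), and the substitution u = k t^2
   turns its integral into Gamma(s) / (2 k^s) minus a Gamma tail of order
   exp (- w/12).  On [1/w, 1] the integrand is at most w exp (- w/8), and on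
   [1, oo) at most (9/10)^(alpha - M - 2) / t^2 because |sin t| <= 9t/10 there;
   both are negligible against k^(-s) >= alpha^(-(M+1)/2).  The integrand is even,
   so I = 2 int_0^oo = (6/alpha)^s Gamma(s) (1 + o(1)), with an error bound that
   depends on beta only through M. *)

(** * Improper integrals on the half-line *)

Definition ex_RInt_on_pos (f : R -> R) := forall x y, 0 < x -> x <= y -> ex_RInt f x y.
Definition nonneg_on_pos (f : R -> R) := forall t, 0 < t -> 0 <= f t.

Lemma RInt_split (f : R -> R) a b c :
  ex_RInt f a b -> ex_RInt f b c -> RInt f a c = RInt f a b + RInt f b c.
Proof. intros Hab Hbc. rewrite <- (RInt_Chasles f a b c Hab Hbc). reflexivity. Qed.

Lemma RInt_le_scal (f g : R -> R) K x y : x <= y -> ex_RInt f x y -> ex_RInt g x y ->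
  (forall t, x < t < y -> f t <= K * g t) -> RInt f x y <= K * RInt g x y.
Proof.
  intros Hxy Hf Hg H. change (K * RInt g x y) with (scal K (RInt g x y)).
  rewrite <- RInt_scal by exact Hg. apply RInt_le; auto. exact (ex_RInt_scal g x y K Hg).
Qed.

Lemma RInt_ge_scal (f g : R -> R) K x y : x <= y -> ex_RInt f x y -> ex_RInt g x y ->
  (forall t, x < t < y -> K * g t <= f t) -> K * RInt g x y <= RInt f x y.
Proof.
  intros Hxy Hf Hg H. change (K * RInt g x y) with (scal K (RInt g x y)).
  rewrite <- RInt_scal by exact Hg. apply RInt_le; auto. exact (ex_RInt_scal g x y K Hg).
Qed.

Lemma RInt_le_const (f : R -> R) K x y : x <= y -> ex_RInt f x y ->
  (forall t, x < t < y -> f t <= K) -> RInt f x y <= K * (y - x).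
Proof.
  intros Hxy Hf H. replace (K * (y - x)) with (RInt (fun _ => K) x y).
  - apply RInt_le; auto. apply ex_RInt_const.
  - rewrite RInt_const. unfold scal; simpl; unfold mult; simpl; ring.
Qed.

Lemma RInt_ge_const (f : R -> R) K x y : x <= y -> ex_RInt f x y ->
  (forall t, x < t < y -> K <= f t) -> K * (y - x) <= RInt f x y.
Proof.
  intros Hxy Hf H. replace (K * (y - x)) with (RInt (fun _ => K) x y).
  - apply RInt_le; auto. apply ex_RInt_const.
  - rewrite RInt_const. unfold scal; simpl; unfold mult; simpl; ring.
Qed.

Section ImproperIntegralPos.

Variable f : R -> R.
Hypothesis f_int : ex_RInt_on_pos f.
Hypothesis f_ge0 : nonneg_on_pos f.

Lemma RInt_le_widen x' x y y' : 0 < x' -> x' <= x -> x <= y -> y <= y' ->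
  RInt f x y <= RInt f x' y'.
Proof.
  intros H0 H1 H2 H3.
  rewrite (RInt_split f x' x y'), (RInt_split f x y y'); try (apply f_int; lra).
  assert (0 <= RInt f x' x).
  { apply RInt_ge_0; [lra | apply f_int; lra | intros t Ht; apply f_ge0; lra]. }
  assert (0 <= RInt f y y').
  { apply RInt_ge_0; [lra | apply f_int; lra | intros t Ht; apply f_ge0; lra]. }
  lra.
Qed.

(* The integral is the supremum of the integrals over compact subintervals. *)
Lemma ImpIntRight_of_bounded B :
  (forall x y, 0 < x -> x <= y -> RInt f x y <= B) -> exists L, ImpIntRight f 0 L.
Proof.
  intros HB.
  set (E := fun v => exists x y, 0 < x /\ x <= y /\ v = RInt f x y).
  assert (E_bound : bound E) by (exists B; intros v [x [y [H1 [H2 ->]]]]; auto).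
  assert (E_inhabited : exists v, E v) by (exists (RInt f 1 1), 1, 1; repeat split; lra).
  destruct (completeness E E_bound E_inhabited) as [L [L_ub L_least]].
  exists L. split.
  - intros x y Hx Hxy. exists (ex_RInt_Reals_0 _ _ _ (f_int x y Hx Hxy)). exact I.
  - intros eps Heps.
    assert (exists x0 y0, 0 < x0 /\ x0 <= y0 /\ L - eps < RInt f x0 y0) as [x0 [y0 [H1 [H2 H3]]]].
    { apply NNPP. intro Hn. assert (L <= L - eps); [|lra].
      apply L_least. intros v [x [y [Hx [Hxy ->]]]].
      apply Rnot_lt_le. intro Hc. apply Hn. exists x, y. auto. }
    exists x0, y0. split; [lra|].
    intros x y Hx Hxd HyK.
    exists (ex_RInt_Reals_0 _ _ _ (f_int x y Hx ltac:(lra))).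
    rewrite <- RInt_Reals.
    assert (RInt f x0 y0 <= RInt f x y) by (apply RInt_le_widen; lra).
    assert (RInt f x y <= L) by (apply L_ub; exists x, y; repeat split; lra).
    apply Rabs_def1; lra.
Qed.

Lemma ImpIntRight_RInt_close L : ImpIntRight f 0 L ->
  forall e, 0 < e -> exists d K, 0 < d /\ forall x y, 0 < x -> x < d -> K < y ->
    Rabs (RInt f x y - L) < e.
Proof.
  intros [_ H] e He. destruct (H e He) as [d [K [Hd H']]].
  exists d, K. split; [exact Hd|]. intros x y Hx Hxd Hy.
  destruct (H' x y Hx ltac:(lra) Hy) as [pr Hpr]. rewrite RInt_Reals with (pr := pr). exact Hpr.
Qed.

Lemma RInt_le_ImpIntRight L : ImpIntRight f 0 L ->
  forall x y, 0 < x -> x <= y -> RInt f x y <= L.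
Proof.
  intros HL x y Hx Hxy. apply Rnot_lt_le. intro Hc.
  destruct (ImpIntRight_RInt_close L HL (RInt f x y - L) ltac:(lra)) as [d [K [Hd H]]].
  set (x' := Rmin x (d / 2)). set (y' := Rmax y (K + 1)).
  assert (0 < x') by (unfold x'; apply Rmin_glb_lt; lra).
  assert (x' <= x) by apply Rmin_l. assert (x' < d) by (unfold x'; generalize (Rmin_r x (d / 2)); lra).
  assert (y <= y') by apply Rmax_l. assert (K < y') by (unfold y'; generalize (Rmax_r y (K + 1)); lra).
  specialize (H x' y' ltac:(lra) ltac:(lra) ltac:(lra)).
  assert (RInt f x y <= RInt f x' y') by (apply RInt_le_widen; lra).
  apply Rabs_def2 in H. lra.
Qed.

Lemma ImpIntRight_le L U : ImpIntRight f 0 L ->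
  (forall x y, 0 < x -> x <= y -> RInt f x y <= U) -> L <= U.
Proof.
  intros HL HU. apply Rnot_lt_le. intro Hc.
  destruct (ImpIntRight_RInt_close L HL (L - U) ltac:(lra)) as [d [K [Hd H]]].
  set (y := Rmax (K + 1) d).
  assert (K < y) by (unfold y; generalize (Rmax_l (K + 1) d); lra).
  assert (d <= y) by apply Rmax_r.
  specialize (H (d / 2) y ltac:(lra) ltac:(lra) ltac:(lra)).
  specialize (HU (d / 2) y ltac:(lra) ltac:(lra)).
  apply Rabs_def2 in H. lra.
Qed.

End ImproperIntegralPos.

Section EvenFunctions.

Variable f : R -> R.
Hypothesis f_even : forall t, f (- t) = f t.
Hypothesis f_int : ex_RInt_on_pos f.

Lemma is_RInt_even_reflect x y l : is_RInt f (- y) (- x) l -> is_RInt f x y l.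
Proof.
  intros H.
  pose proof (is_RInt_comp_lin f (-1) 0 y x l) as Hl.
  replace (-1 * y + 0) with (- y) in Hl by ring.
  replace (-1 * x + 0) with (- x) in Hl by ring.
  apply is_RInt_swap in Hl; [|exact H].
  replace l with (opp (opp l)) by (apply opp_opp).
  eapply is_RInt_ext; [|apply is_RInt_opp; exact Hl].
  intros t _. unfold opp, scal; simpl. unfold mult; simpl.
  replace (-1 * t + 0) with (- t) by ring. rewrite f_even. ring.
Qed.

Lemma ex_RInt_even_neg x y : x <= y -> y < 0 -> ex_RInt f x y.
Proof.
  intros Hxy Hy. destruct (f_int (- y) (- x) ltac:(lra) ltac:(lra)) as [l Hl].
  exists l. apply is_RInt_even_reflect. exact Hl.
Qed.

Lemma RInt_even_reflect x y : 0 < x -> x <= y -> RInt f (- y) (- x) = RInt f x y.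
Proof.
  intros Hx Hxy. destruct (f_int x y Hx Hxy) as [l Hl].
  apply is_RInt_unique, is_RInt_even_reflect. rewrite !Ropp_involutive.
  rewrite (is_RInt_unique f x y l Hl). exact Hl.
Qed.

Lemma ImpIntRight_of_ImpIntLeft L : ImpIntLeft f 0 L -> ImpIntRight f 0 L.
Proof.
  intros [_ H]. split.
  - intros x y Hx Hxy. exists (ex_RInt_Reals_0 _ _ _ (f_int x y Hx Hxy)). exact I.
  - intros eps Heps. destruct (H eps Heps) as [d [K [Hd H']]].
    exists d, (Rmax (- K) d). split; [exact Hd|]. intros x y Hx Hxd Hy.
    assert (- K < y) by (generalize (Rmax_l (- K) d); lra).
    assert (d < y) by (generalize (Rmax_r (- K) d); lra).
    destruct (H' (- y) (- x)) as [pr Hpr]; try lra.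
    exists (ex_RInt_Reals_0 _ _ _ (f_int x y Hx ltac:(lra))).
    rewrite <- RInt_Reals. rewrite <- RInt_Reals, RInt_even_reflect in Hpr by lra.
    exact Hpr.
Qed.

Lemma ImpIntLeft_of_ImpIntRight L : ImpIntRight f 0 L -> ImpIntLeft f 0 L.
Proof.
  intros [_ H]. split.
  - intros x y Hxy Hy. exists (ex_RInt_Reals_0 _ _ _ (ex_RInt_even_neg x y Hxy Hy)). exact I.
  - intros eps Heps. destruct (H eps Heps) as [d [K [Hd H']]].
    exists d, (Rmin (- K) (- d)). split; [exact Hd|]. intros x y Hy Hyd Hx.
    assert (x < - K) by (generalize (Rmin_l (- K) (- d)); lra).
    assert (x < - d) by (generalize (Rmin_r (- K) (- d)); lra).
    destruct (H' (- y) (- x)) as [pr Hpr]; try lra.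
    exists (ex_RInt_Reals_0 _ _ _ (ex_RInt_even_neg x y ltac:(lra) Hy)).
    rewrite <- RInt_Reals. rewrite <- RInt_Reals in Hpr.
    rewrite <- (Ropp_involutive x), <- (Ropp_involutive y), RInt_even_reflect by lra.
    exact Hpr.
Qed.

End EvenFunctions.

Lemma Rpower_pos x y : 0 < Rpower x y.
Proof. apply exp_pos. Qed.

Lemma Rmax_le_inv x y z : Rmax x y <= z -> x <= z /\ y <= z.
Proof. generalize (Rmax_l x y) (Rmax_r x y). lra. Qed.

Lemma exp_le_compat x y : x <= y -> exp x <= exp y.
Proof. intros [H | ->]; [left; apply exp_increasing; exact H | lra]. Qed.

Lemma exp_le_1 x : x <= 0 -> exp x <= 1.
Proof. intros H. rewrite <- exp_0. apply exp_le_compat; exact H. Qed.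

Lemma Rpower_exp z a : Rpower (exp z) a = exp (a * z).
Proof. unfold Rpower. rewrite ln_exp. reflexivity. Qed.

Lemma exp_le_1_plus_2x x : 0 <= x <= 1/2 -> exp x <= 1 + 2 * x.
Proof.
  intros Hx. assert (H := exp_ineq1_le (- x)). rewrite exp_Ropp in H.
  assert (0 < exp x) by apply exp_pos.
  assert ((1 - x) * exp x <= 1).
  { apply Rmult_le_compat_r with (r := exp x) in H; [|lra]. rewrite Rinv_l in H by lra. lra. }
  nra.
Qed.

Lemma exp_neg_mul_ge x u v : 0 <= x -> u <= v -> 0 <= v -> u - x * v <= exp (- x) * u.
Proof.
  intros Hx Huv Hv. assert (H := exp_ineq1_le (- x)).
  assert (exp (- x) <= 1) by (apply exp_le_1; lra).
  destruct (Rle_dec 0 u); nra.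
Qed.

Lemma pow_le_1 t n : 0 <= t <= 1 -> t ^ n <= 1.
Proof. intros H. rewrite <- (pow1 n). apply pow_incr; lra. Qed.

Lemma Rpower_le_exp q z a : 0 <= a -> 0 < q -> q <= exp z -> Rpower q a <= exp (a * z).
Proof. intros Ha Hq H. rewrite <- Rpower_exp. apply Rle_Rpower_l; auto. Qed.

Lemma exp_le_Rpower q z a : 0 <= a -> exp z <= q -> exp (a * z) <= Rpower q a.
Proof.
  intros Ha H. rewrite <- Rpower_exp. apply Rle_Rpower_l; [exact Ha|].
  split; [apply exp_pos | exact H].
Qed.

Lemma Rpower_le_inv t c : 0 < t <= 1 -> -1 <= c -> Rpower t c <= / t.
Proof.
  intros Ht Hc. unfold Rpower. rewrite <- (exp_ln t) at 2 by lra. rewrite <- exp_Ropp.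
  apply exp_le_compat. assert (ln t <= 0) by (rewrite <- ln_1; apply ln_le; lra). nra.
Qed.

Lemma Rpower_m2 t : 0 < t -> Rpower t (-2) = / t^2.
Proof.
  intros H. replace (-2) with (- INR 2) by (simpl; ring).
  rewrite Rpower_Ropp, Rpower_pow by exact H. reflexivity.
Qed.

Lemma nat_above r : exists n : nat, r <= INR n.
Proof. destruct (INR_unbounded r) as [n Hn]. exists n. lra. Qed.

Lemma Rpower_cube w p : 0 < w -> Rpower (w ^ 3) p = Rpower w (3 * p).
Proof.
  intros Hw. replace (w ^ 3) with (Rpower w (INR 3)) by (apply Rpower_pow; exact Hw).
  rewrite Rpower_mult. simpl INR. f_equal. ring.
Qed.

Lemma Rpower_third_cube x : 0 < x -> Rpower x (/ 3) ^ 3 = x.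
Proof.
  intros Hx. rewrite <- Rpower_pow by apply Rpower_pos. rewrite Rpower_mult. simpl INR.
  replace (/ 3 * (1 + 1 + 1)) with 1 by field. apply Rpower_1; exact Hx.
Qed.

Lemma Rpower_six_div a s : 0 < a -> Rpower (6 / a) s = 2 * (/ (2 * Rpower (a / 6) s)).
Proof.
  intros Ha. replace (6 / a) with (/ (a / 6)) by (field; lra).
  unfold Rpower. rewrite ln_Rinv by lra. rewrite Rinv_mult, <- exp_Ropp.
  field_simplify. f_equal. ring.
Qed.

Lemma powR_pos x y : 0 < x -> powR x y = Rpower x y.
Proof. intros H. unfold powR. destruct (Rle_dec x 0); [lra | reflexivity]. Qed.

Lemma powR_nonpos x y : x <= 0 -> powR x y = 0.
Proof. intros H. unfold powR. destruct (Rle_dec x 0); [reflexivity | lra]. Qed.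

Lemma powR_ge0 x y : 0 <= powR x y.
Proof. unfold powR. destruct (Rle_dec x 0); [lra | left; apply Rpower_pos]. Qed.

Lemma continuity_pt_Rpower a y : 0 < y -> continuity_pt (fun x => Rpower x a) y.
Proof.
  intros Hy. apply derivable_continuous_pt. exists (a * Rpower y (a - 1)).
  apply derivable_pt_lim_power; exact Hy.
Qed.

Lemma continuity_pt_powR a y : 0 < a -> continuity_pt (fun x => powR x a) y.
Proof.
  intros Ha. unfold continuity_pt, continue_in, limit1_in, limit_in. simpl.
  unfold R_dist. intros eps Heps.
  destruct (Rtotal_order y 0) as [Hy | [Hy | Hy]].
  - exists (- y). split; [lra|]. intros x [_ Hx]. apply Rabs_def2 in Hx.
    rewrite !powR_nonpos by lra. rewrite Rminus_0_r, Rabs_R0; lra.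
  - subst y. exists (Rpower eps (/ a)). split; [apply Rpower_pos|].
    intros x [_ Hx]. rewrite (powR_nonpos 0), Rminus_0_r by lra. rewrite Rminus_0_r in Hx.
    destruct (Rle_dec x 0) as [Hx0 | Hx0].
    + rewrite powR_nonpos, Rabs_R0 by lra. lra.
    + rewrite powR_pos, Rabs_pos_eq by (try left; try apply Rpower_pos; lra).
      rewrite Rabs_pos_eq in Hx by lra.
      replace eps with (Rpower (Rpower eps (/ a)) a).
      * apply Rlt_Rpower_l; lra.
      * rewrite Rpower_mult. replace (/ a * a) with 1 by (field; lra). apply Rpower_1; lra.
  - destruct (continuity_pt_Rpower a y Hy eps Heps) as [d [Hd H]].
    exists (Rmin d y). split; [apply Rmin_glb_lt; lra|].
    intros x [Hxy Hx]. simpl in H. generalize (Rmin_l d y) (Rmin_r d y). intros.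
    assert (0 < x) by (apply Rabs_def2 in Hx; lra).
    rewrite !powR_pos by lra. apply H. split; [exact Hxy|]. simpl. unfold R_dist. lra.
Qed.

Lemma continuity_pt_exp x : continuity_pt exp x.
Proof. apply derivable_continuous_pt, derivable_pt_exp. Qed.

Lemma ex_RInt_on_pos_continuous (f g : R -> R) :
  (forall t, 0 < t -> f t = g t) -> (forall t, 0 < t -> continuity_pt g t) -> ex_RInt_on_pos f.
Proof.
  intros Hfg Hg x y Hx Hxy. apply ex_RInt_ext with g.
  { intros t Ht. rewrite Rmin_left, Rmax_right in Ht by lra. symmetry; apply Hfg; lra. }
  apply (@ex_RInt_continuous R_CompleteNormedModule). intros z Hz.
  rewrite Rmin_left, Rmax_right in Hz by lra.
  apply continuity_pt_filterlim, Hg. lra.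
Qed.

Definition sin_integrand a b t := powR (Rabs (sin t)) a * powR (Rabs t) (- b).
Definition gamma_integrand s u := powR u (s - 1) * exp (- u).
Definition gauss_integrand c k t := Rpower t c * exp (- (k * t ^ 2)).

Lemma sin_integrand_even a b t : sin_integrand a b (- t) = sin_integrand a b t.
Proof. unfold sin_integrand. rewrite sin_neg, !Rabs_Ropp. reflexivity. Qed.

Lemma sin_integrand_ge0 a b : nonneg_on_pos (sin_integrand a b).
Proof. intros t _. apply Rmult_le_pos; apply powR_ge0. Qed.

Lemma gamma_integrand_ge0 s : nonneg_on_pos (gamma_integrand s).
Proof. intros t _. apply Rmult_le_pos; [apply powR_ge0 | left; apply exp_pos]. Qed.

Lemma gauss_integrand_ge0 c k : nonneg_on_pos (gauss_integrand c k).
Proof. intros t _. apply Rmult_le_pos; left; [apply Rpower_pos | apply exp_pos]. Qed.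

Lemma sin_integrand_int a b : 0 < a -> ex_RInt_on_pos (sin_integrand a b).
Proof.
  intros Ha.
  apply ex_RInt_on_pos_continuous with (g := fun t => powR (Rabs (sin t)) a * Rpower t (- b)).
  - intros t Ht. unfold sin_integrand. rewrite (Rabs_pos_eq t), (powR_pos t) by lra. reflexivity.
  - intros t Ht. apply continuity_pt_mult; [|apply continuity_pt_Rpower; exact Ht].
    apply (continuity_pt_comp (fun t => Rabs (sin t)) (fun u => powR u a)).
    + apply (continuity_pt_comp sin Rabs); [apply continuity_sin | apply Rcontinuity_abs].
    + apply continuity_pt_powR; exact Ha.
Qed.

Lemma gamma_integrand_int s : ex_RInt_on_pos (gamma_integrand s).
Proof.
  apply ex_RInt_on_pos_continuous with (g := fun u => Rpower u (s - 1) * exp (- u)).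
  - intros t Ht. unfold gamma_integrand. rewrite powR_pos by lra. reflexivity.
  - intros t Ht. apply continuity_pt_mult; [apply continuity_pt_Rpower; exact Ht|].
    apply (continuity_pt_comp Ropp exp).
    + apply continuity_pt_opp, continuity_pt_id.
    + apply continuity_pt_exp.
Qed.

Lemma gauss_integrand_int c k : ex_RInt_on_pos (gauss_integrand c k).
Proof.
  apply ex_RInt_on_pos_continuous with (g := gauss_integrand c k); [reflexivity|].
  intros t Ht. apply continuity_pt_mult; [apply continuity_pt_Rpower; exact Ht|].
  apply (continuity_pt_comp (fun t => - (k * t ^ 2)) exp); [|apply continuity_pt_exp].
  apply continuity_pt_opp, continuity_pt_mult.
  - apply continuity_pt_const. intros u v; reflexivity.
  - apply derivable_continuous_pt, derivable_pt_pow.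
Qed.


(** * Estimates of the integrand of I *)

Lemma PI_gt_3 : 3 < PI.
Proof. generalize PI2_3_2; lra. Qed.

Lemma INR_fact_S n : INR (fact (S n)) = INR (S n) * INR (fact n).
Proof. rewrite fact_simpl, mult_INR. reflexivity. Qed.

Lemma sin_taylor_bounds t : 0 <= t <= PI ->
  t - t^3/6 + t^5/120 - t^7/5040 <= sin t <= t - t^3/6 + t^5/120 - t^7/5040 + t^9/362880.
Proof.
  intros H. destruct (SIN t ltac:(lra) ltac:(lra)) as [H1 H2].
  unfold sin_lb, sin_ub, sin_approx in *. cbn [sum_f_R0] in *.
  unfold sin_term in *. cbn [Nat.mul Nat.add] in *.
  rewrite !INR_fact_S in *. cbn [fact] in *. rewrite !S_INR in *. simpl INR in *.
  split; lra.
Qed.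

Lemma sin_div_le_exp t : 0 < t <= 1 -> sin t / t <= exp (- (t^2/6) + t^4/120).
Proof.
  intros H. destruct (sin_taylor_bounds t) as [_ Hub]; [generalize PI_gt_3; lra|].
  eapply Rle_trans; [|apply exp_ineq1_le].
  apply Rmult_le_reg_r with t; [lra|].
  unfold Rdiv. rewrite Rmult_assoc, Rinv_l, Rmult_1_r by lra.
  assert (0 < t^2) by (apply pow_lt; lra).
  assert (t^2 <= 1) by (apply pow_le_1; lra).
  assert (t^9 <= 72 * t^7).
  { replace (t^9) with (t^7 * t^2) by ring. assert (0 < t^7) by (apply pow_lt; lra). nra. }
  nra.
Qed.

Lemma exp_le_sin_div t : 0 < t <= 1 -> exp (- (t^2/6 + t^4/30)) <= sin t / t.
Proof.
  intros H. destruct (sin_taylor_bounds t) as [Hlb _]; [generalize PI_gt_3; lra|].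
  assert (0 < t^2) by (apply pow_lt; lra).
  assert (t^2 <= 1) by (apply pow_le_1; lra).
  set (y := t^2/6 + t^4/30).
  assert (Hy : 0 <= y) by (unfold y; assert (0 < t^4) by (apply pow_lt; lra); lra).
  assert (Hsin : 1 - t^2/6 <= sin t / t).
  { apply Rmult_le_reg_r with t; [lra|].
    unfold Rdiv. rewrite Rmult_assoc, Rinv_l, Rmult_1_r by lra.
    assert (0 < t^5) by (apply pow_lt; lra).
    assert (t^7 <= 42 * t^5) by (replace (t^7) with (t^5 * t^2) by ring; nra).
    nra. }
  apply Rle_trans with (1 - t^2/6); [|exact Hsin].
  rewrite exp_Ropp. apply Rmult_le_reg_r with (exp y); [apply exp_pos|].
  rewrite Rinv_l by (apply Rgt_not_eq, exp_pos).
  assert (He := exp_ineq1_le y).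
  assert (1 <= (1 - t^2/6) * (1 + y)) by (unfold y; replace (t^4) with (t^2 * t^2) by ring; nra).
  nra.
Qed.

Lemma Rabs_sin_le t : 1 <= t -> Rabs (sin t) <= 9/10 * t.
Proof.
  intros H. destruct (Rle_dec t (10/9)) as [Ht | Ht].
  - destruct (sin_taylor_bounds t) as [_ Hub]; [generalize PI_gt_3; lra|].
    assert (0 <= sin t) by (apply sin_ge_0; generalize PI_gt_3; lra).
    rewrite Rabs_pos_eq by lra.
    assert (1 <= t^2 <= 100/81) by (split; nra).
    assert (0 < t^7) by (apply pow_lt; lra).
    assert (t^9 <= 72 * t^7) by (replace (t^9) with (t^7 * t^2) by ring; nra).
    assert (t^4 = t^2 * t^2) by ring.
    assert (t^3 = t^2 * t) by ring. assert (t^5 = t^4 * t) by ring.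
    assert (1 - t^2/6 + t^4/120 <= 9/10) by nra.
    nra.
  - generalize (SIN_bound t). intros. apply Rabs_le; lra.
Qed.

Section SinIntegrandBounds.

Variables a b : R.
Hypothesis a_ge0 : 0 <= a.

Lemma sin_integrand_near0 t : 0 < t <= 1 ->
  sin_integrand a b t = Rpower t (a - b) * Rpower (sin t / t) a.
Proof.
  intros Ht. unfold sin_integrand.
  assert (0 < sin t) by (apply sin_gt_0; generalize PI_gt_3; lra).
  rewrite !Rabs_pos_eq, !powR_pos by lra.
  replace (sin t) with (t * (sin t / t)) at 1 by (field; lra).
  rewrite <- Rpower_mult_distr by (try apply Rdiv_lt_0_compat; lra).
  unfold Rminus. rewrite Rpower_plus. ring.
Qed.

Lemma sin_integrand_le_gauss t : 0 < t <= 1 ->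
  sin_integrand a b t <= gauss_integrand (a - b) (a / 6) t * exp (a * t^4 / 120).
Proof.
  intros Ht. rewrite sin_integrand_near0 by exact Ht. unfold gauss_integrand.
  assert (0 < sin t) by (apply sin_gt_0; generalize PI_gt_3; lra).
  rewrite Rmult_assoc. apply Rmult_le_compat_l; [left; apply Rpower_pos|].
  rewrite <- exp_plus. eapply Rle_trans.
  - apply Rpower_le_exp; [exact a_ge0 | apply Rdiv_lt_0_compat; lra | apply sin_div_le_exp; exact Ht].
  - apply exp_le_compat. lra.
Qed.

Lemma gauss_le_sin_integrand t : 0 < t <= 1 ->
  gauss_integrand (a - b) (a / 6) t * exp (- (a * t^4 / 30)) <= sin_integrand a b t.
Proof.
  intros Ht. rewrite sin_integrand_near0 by exact Ht. unfold gauss_integrand.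
  rewrite Rmult_assoc. apply Rmult_le_compat_l; [left; apply Rpower_pos|].
  rewrite <- exp_plus. eapply Rle_trans.
  2: { apply exp_le_Rpower; [exact a_ge0 | apply exp_le_sin_div; exact Ht]. }
  apply exp_le_compat. lra.
Qed.

Lemma sin_integrand_le_mid t d : 0 < d -> d <= t <= 1 -> -1 <= a - b ->
  sin_integrand a b t <= / d * exp (- (a * d^2 / 8)).
Proof.
  intros Hd Ht Hc. eapply Rle_trans; [apply sin_integrand_le_gauss; lra|].
  unfold gauss_integrand. rewrite Rmult_assoc, <- exp_plus.
  apply Rmult_le_compat; [left; apply Rpower_pos | left; apply exp_pos | |].
  - eapply Rle_trans; [apply Rpower_le_inv; lra | apply Rinv_le_contravar; lra].
  - apply exp_le_compat.
    assert (d^2 <= t^2) by (apply pow_incr; lra).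
    assert (t^2 <= 1) by (apply pow_le_1; lra).
    assert (t^4 = t^2 * t^2) by ring.
    assert (0 <= a * (t^2 - t^4)) by (apply Rmult_le_pos; nra).
    assert (0 <= a * (t^2 - d^2)) by (apply Rmult_le_pos; nra).
    assert (0 <= a * t^2) by (apply Rmult_le_pos; nra).
    nra.
Qed.

(* Split |sin t|^a as |sin t|^(a-N) |sin t|^N with |sin t|^N <= 1: the first
   factor gives the geometric decay, the second pays for t^(a-b) <= t^(N-2). *)
Lemma sin_integrand_le_far t N : 0 <= N -> N <= a -> a - b - N <= -2 -> 1 <= t ->
  sin_integrand a b t <= Rpower (9/10) (a - N) * / t^2.
Proof.
  intros HN HNa Hc Ht. unfold sin_integrand.
  assert (0 < Rpower (9/10) (a - N)) by apply Rpower_pos.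
  assert (0 < / t^2) by (apply Rinv_0_lt_compat, pow_lt; lra).
  destruct (Req_dec (sin t) 0) as [Hs | Hs].
  { rewrite Hs, Rabs_R0, powR_nonpos by lra. nra. }
  assert (Hsin : 0 < Rabs (sin t)) by (apply Rabs_pos_lt; exact Hs).
  rewrite (Rabs_pos_eq t), !powR_pos by lra.
  replace a with ((a - N) + N) at 1 by ring. rewrite Rpower_plus.
  assert (Hpow_N : Rpower (Rabs (sin t)) N <= 1).
  { unfold Rpower. apply exp_le_1.
    assert (ln (Rabs (sin t)) <= 0).
    { rewrite <- ln_1. apply ln_le; [exact Hsin|]. apply Rabs_le, SIN_bound. }
    nra. }
  assert (Hpow_geom : Rpower (Rabs (sin t)) (a - N) <= Rpower (9/10) (a - N) * Rpower t (a - N)).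
  { rewrite Rpower_mult_distr by lra. apply Rle_Rpower_l; [lra|].
    split; [lra | apply Rabs_sin_le; exact Ht]. }
  assert (Hpow_t : Rpower t (a - N) * Rpower t (- b) <= / t^2).
  { rewrite <- Rpower_plus, <- Rpower_m2 by lra. apply Rle_Rpower; lra. }
  assert (0 < Rpower (Rabs (sin t)) (a - N)) by apply Rpower_pos.
  assert (0 < Rpower (Rabs (sin t)) N) by apply Rpower_pos.
  assert (0 < Rpower t (- b)) by apply Rpower_pos.
  assert (0 < Rpower t (a - N)) by apply Rpower_pos.
  assert (0 < Rpower (Rabs (sin t)) (a - N) * Rpower t (- b)) by (apply Rmult_lt_0_compat; lra).
  apply Rle_trans with (Rpower (Rabs (sin t)) (a - N) * Rpower t (- b)); [nra|].
  apply Rle_trans with (Rpower (9/10) (a - N) * Rpower t (a - N) * Rpower t (- b)).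
  { apply Rmult_le_compat_r; lra. }
  rewrite Rmult_assoc. apply Rmult_le_compat_l; lra.
Qed.

End SinIntegrandBounds.

(** * The Gamma function *)

Lemma pow_div_fact_le_exp x n : 0 <= x -> x ^ n / INR (fact n) <= exp x.
Proof.
  intros Hx. apply Rle_trans with (sum_f_R0 (fun k => x ^ k / INR (fact k)) n);
    [|apply exp_ge_taylor; exact Hx].
  destruct n as [|n]; [apply Rle_refl|]. rewrite tech5.
  enough (0 <= sum_f_R0 (fun k => x ^ k / INR (fact k)) n) by lra.
  apply cond_pos_sum. intro k. apply Rmult_le_pos; [apply pow_le; exact Hx|].
  left; apply Rinv_0_lt_compat, lt_0_INR, lt_O_fact.
Qed.

Lemma exp_neg_le_fact_div x m : 0 < x -> exp (- x) <= INR (fact m) / x ^ m.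
Proof.
  intros Hx. rewrite exp_Ropp.
  assert (H := pow_div_fact_le_exp x m ltac:(lra)).
  assert (0 < INR (fact m)) by apply lt_0_INR, lt_O_fact.
  assert (0 < x ^ m / INR (fact m)) by (apply Rdiv_lt_0_compat; [apply pow_lt|]; lra).
  rewrite <- Rinv_div. apply Rinv_le_contravar; assumption.
Qed.

Definition gamma_tail_const n := INR (fact n) * 2 ^ n.

Lemma gamma_tail_const_pos n : 0 < gamma_tail_const n.
Proof. apply Rmult_lt_0_compat; [apply lt_0_INR, lt_O_fact | apply pow_lt; lra]. Qed.

Lemma pow_le_exp_half u n : 0 <= u -> u ^ n <= gamma_tail_const n * exp (u / 2).
Proof.
  intros Hu. assert (H := pow_div_fact_le_exp (u / 2) n ltac:(lra)).
  assert (0 < INR (fact n)) by apply lt_0_INR, lt_O_fact.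
  assert (0 < 2 ^ n) by (apply pow_lt; lra).
  unfold gamma_tail_const.
  replace (u ^ n) with (INR (fact n) * 2 ^ n * ((u / 2) ^ n / INR (fact n))).
  - apply Rmult_le_compat_l; [nra | exact H].
  - unfold Rdiv. rewrite Rpow_mult_distr, pow_inv. field. lra.
Qed.

Lemma gamma_integrand_le_tail s u n : 1 <= u -> s - 1 <= INR n ->
  gamma_integrand s u <= gamma_tail_const n * exp (- (u / 2)).
Proof.
  intros Hu Hn. unfold gamma_integrand. rewrite powR_pos by lra.
  assert (Rpower u (s - 1) <= u ^ n) by (rewrite <- Rpower_pow by lra; apply Rle_Rpower; lra).
  assert (u ^ n <= gamma_tail_const n * exp (u / 2)) by (apply pow_le_exp_half; lra).
  replace (exp (- (u / 2))) with (exp (u / 2) * exp (- u)) by (rewrite <- exp_plus; f_equal; lra).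
  rewrite <- Rmult_assoc. apply Rmult_le_compat_r; [left; apply exp_pos | lra].
Qed.

Lemma gamma_integrand_le_pow s u : 0 < u -> gamma_integrand s u <= Rpower u (s - 1).
Proof.
  intros Hu. unfold gamma_integrand. rewrite powR_pos by lra.
  assert (exp (- u) <= 1) by (apply exp_le_1; lra).
  assert (0 < Rpower u (s - 1)) by apply Rpower_pos. nra.
Qed.

Lemma gamma_integrand_ge_12 s u : 0 < s -> 1 <= u <= 2 -> exp (-2) / 2 <= gamma_integrand s u.
Proof.
  intros Hs Hu. unfold gamma_integrand. rewrite powR_pos by lra.
  assert (Hpow : 1/2 <= Rpower u (s - 1)).
  { destruct (Rle_dec 1 s).
    - apply Rle_trans with (Rpower u 0); [rewrite Rpower_O; lra | apply Rle_Rpower; lra].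
    - apply Rle_trans with (Rpower u (- (1))); [|apply Rle_Rpower; lra].
      rewrite Rpower_Ropp, Rpower_1 by lra. apply Rmult_le_reg_r with u; [lra|].
      rewrite Rinv_l by lra. lra. }
  assert (exp (-2) <= exp (- u)) by (apply exp_le_compat; lra).
  assert (0 < exp (-2)) by apply exp_pos. nra.
Qed.

Lemma RInt_pow_le s x : 0 < s -> 0 < x <= 1 -> RInt (fun u => Rpower u (s - 1)) x 1 <= / s.
Proof.
  intros Hs Hx.
  assert (H : is_RInt (fun u => Rpower u (s - 1)) x 1 (/ s * Rpower 1 s - / s * Rpower x s)).
  { apply (@is_RInt_derive R_CompleteNormedModule (fun u => / s * Rpower u s)).
    - intros t Ht. rewrite Rmin_left, Rmax_right in Ht by lra.
      apply is_derive_Reals.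
      replace (Rpower t (s - 1)) with (/ s * (s * Rpower t (s - 1))) by (field; lra).
      apply derivable_pt_lim_scal, derivable_pt_lim_power. lra.
    - intros t Ht. rewrite Rmin_left, Rmax_right in Ht by lra.
      apply continuity_pt_filterlim, continuity_pt_Rpower. lra. }
  rewrite (is_RInt_unique _ _ _ _ H).
  replace (Rpower 1 s) with 1 by (unfold Rpower; rewrite ln_1, Rmult_0_r, exp_0; reflexivity).
  assert (0 < / s) by (apply Rinv_0_lt_compat; lra).
  generalize (Rpower_pos x s). nra.
Qed.

Lemma RInt_exp_half_le X Y : X <= Y -> RInt (fun u => exp (- (u / 2))) X Y <= 2 * exp (- (X / 2)).
Proof.
  intros H.
  assert (H1 : is_RInt (fun u => exp (- (u / 2))) X Y
                 (-2 * exp (- (Y / 2)) - -2 * exp (- (X / 2)))).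
  { apply (@is_RInt_derive R_CompleteNormedModule (fun u => -2 * exp (- (u / 2)))).
    - intros t Ht. auto_derive; [exact I|].
      match goal with |- ?l = ?r => change (@eq R l r) end.
      unfold Rdiv. set (e := exp _). lra.
    - intros t Ht. apply (ex_derive_continuous (V := R_NormedModule)). auto_derive. exact I. }
  rewrite (is_RInt_unique _ _ _ _ H1). generalize (exp_pos (- (Y / 2))). lra.
Qed.

Lemma ex_RInt_inv_sq y : 1 <= y -> ex_RInt (fun t => / t ^ 2) 1 y.
Proof.
  intros Hy. apply (@ex_RInt_continuous R_CompleteNormedModule). intros z Hz.
  rewrite Rmin_left, Rmax_right in Hz by lra.
  apply (ex_derive_continuous (V := R_NormedModule)). auto_derive.
  assert (0 < z ^ 2) by (apply pow_lt; lra). lra.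
Qed.

Lemma RInt_inv_sq_le Y : 1 <= Y -> RInt (fun t => / t ^ 2) 1 Y <= 1.
Proof.
  intros H.
  assert (H1 : is_RInt (fun t => / t ^ 2) 1 Y (- / Y - - / 1)).
  { apply (@is_RInt_derive R_CompleteNormedModule (fun t => - / t)).
    - intros t Ht. rewrite Rmin_left, Rmax_right in Ht by lra.
      auto_derive; [lra|]. match goal with |- ?l = ?r => change (@eq R l r) end. field. lra.
    - intros t Ht. rewrite Rmin_left, Rmax_right in Ht by lra.
      apply (ex_derive_continuous (V := R_NormedModule)). auto_derive.
      assert (0 < t ^ 2) by (apply pow_lt; lra). lra. }
  rewrite (is_RInt_unique _ _ _ _ H1).
  assert (0 < / Y) by (apply Rinv_0_lt_compat; lra). rewrite Rinv_1. lra.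
Qed.

Lemma ex_RInt_exp_half x y : ex_RInt (fun u => exp (- (u / 2))) x y.
Proof.
  apply (@ex_RInt_continuous R_CompleteNormedModule). intros z _.
  apply (ex_derive_continuous (V := R_NormedModule)). auto_derive. exact I.
Qed.

Lemma RInt_gamma_integrand_tail s n X Y : s - 1 <= INR n -> 1 <= X -> X <= Y ->
  RInt (gamma_integrand s) X Y <= gamma_tail_const n * (2 * exp (- (X / 2))).
Proof.
  intros Hn HX HXY. eapply Rle_trans.
  - apply RInt_le_scal with (g := fun u => exp (- (u / 2))) (K := gamma_tail_const n); [exact HXY | | |].
    + apply gamma_integrand_int; lra.
    + apply ex_RInt_exp_half.
    + intros t Ht. apply gamma_integrand_le_tail; lra.
  - apply Rmult_le_compat_l; [left; apply gamma_tail_const_pos | apply RInt_exp_half_le; exact HXY].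
Qed.

Lemma RInt_gamma_integrand_bounded s n x y : 0 < s -> s - 1 <= INR n -> 0 < x -> x <= y ->
  RInt (gamma_integrand s) x y <= / s + gamma_tail_const n * 2.
Proof.
  intros Hs Hn Hx Hxy.
  set (x' := Rmin x 1). set (y' := Rmax y 1).
  assert (0 < x') by (unfold x'; apply Rmin_glb_lt; lra).
  assert (x' <= x) by apply Rmin_l. assert (x' <= 1) by apply Rmin_r.
  assert (y <= y') by apply Rmax_l. assert (1 <= y') by apply Rmax_r.
  assert (Hint := gamma_integrand_int s).
  eapply Rle_trans; [apply (RInt_le_widen _ Hint (gamma_integrand_ge0 s) x' x y y'); lra|].
  rewrite (RInt_split _ x' 1 y') by (apply Hint; lra).
  assert (RInt (gamma_integrand s) x' 1 <= / s).
  { eapply Rle_trans; [|apply (RInt_pow_le s x'); lra].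
    apply RInt_le; [lra | apply Hint; lra | |].
    - apply (ex_RInt_on_pos_continuous _ (fun u => Rpower u (s - 1))); [reflexivity | |lra|lra].
      intros t Ht. apply continuity_pt_Rpower; exact Ht.
    - intros t Ht. apply gamma_integrand_le_pow; lra. }
  assert (RInt (gamma_integrand s) 1 y' <= gamma_tail_const n * 2).
  { eapply Rle_trans; [apply RInt_gamma_integrand_tail; eauto; lra|].
    apply Rmult_le_compat_l; [left; apply gamma_tail_const_pos|].
    assert (exp (- (1 / 2)) <= 1) by (apply exp_le_1; lra). lra. }
  lra.
Qed.

Lemma Gamma_spec s : 0 < s -> ImpIntRight (gamma_integrand s) 0 (Gamma s).
Proof.
  intros Hs. destruct (nat_above (s - 1)) as [n Hn].
  unfold Gamma. apply epsilon_spec.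
  apply (ImpIntRight_of_bounded _ (gamma_integrand_int s) (gamma_integrand_ge0 s)
           (/ s + gamma_tail_const n * 2)).
  intros x y Hx Hxy. apply RInt_gamma_integrand_bounded; assumption.
Qed.

Lemma RInt_gamma_integrand_le_Gamma s x y : 0 < s -> 0 < x -> x <= y ->
  RInt (gamma_integrand s) x y <= Gamma s.
Proof.
  intros Hs Hx Hxy.
  apply (RInt_le_ImpIntRight _ (gamma_integrand_int s) (gamma_integrand_ge0 s));
    [apply Gamma_spec | |]; assumption.
Qed.

Lemma Gamma_ge s : 0 < s -> exp (-2) / 2 <= Gamma s.
Proof.
  intros Hs. eapply Rle_trans; [|apply (RInt_gamma_integrand_le_Gamma s 1 2); lra].
  replace (exp (-2) / 2) with (exp (-2) / 2 * (2 - 1)) by ring.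
  apply RInt_ge_const; [lra | apply gamma_integrand_int; lra |].
  intros t Ht. apply gamma_integrand_ge_12; lra.
Qed.

Lemma one_le_Gamma_mul s : 0 < s -> 1 <= 2 * exp 2 * Gamma s.
Proof.
  intros Hs. assert (H := Gamma_ge s Hs).
  assert (exp 2 * exp (-2) = 1) by (rewrite <- exp_plus, <- exp_0; f_equal; ring).
  generalize (exp_pos 2). nra.
Qed.

Lemma inv_Gamma_le s : 0 < s -> / Gamma s <= 2 * exp 2.
Proof.
  intros Hs. assert (H := one_le_Gamma_mul s Hs).
  assert (0 < Gamma s) by (generalize (exp_pos 2); nra).
  apply Rmult_le_reg_r with (Gamma s); [assumption|].
  rewrite Rinv_l by lra. lra.
Qed.

Lemma Gamma_le_RInt_tail s n X eta : 0 < s -> s - 1 <= INR n -> 1 <= X -> 0 < eta ->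
  exists x0, 0 < x0 /\ forall x, 0 < x -> x < x0 ->
    Gamma s - eta - gamma_tail_const n * (2 * exp (- (X / 2))) <= RInt (gamma_integrand s) x X.
Proof.
  intros Hs Hn HX Heta.
  destruct (ImpIntRight_RInt_close _ (Gamma s) (Gamma_spec s Hs) eta Heta) as [d [K [Hd H]]].
  exists (Rmin d 1). split; [apply Rmin_glb_lt; lra|].
  intros x Hx Hxd. generalize (Rmin_l d 1) (Rmin_r d 1). intros.
  set (y := Rmax (K + 1) X).
  assert (K < y) by (unfold y; generalize (Rmax_l (K + 1) X); lra).
  assert (X <= y) by apply Rmax_r.
  specialize (H x y Hx ltac:(lra) ltac:(lra)).
  rewrite (RInt_split _ x X y) in H by (apply gamma_integrand_int; lra).
  assert (RInt (gamma_integrand s) X y <= gamma_tail_const n * (2 * exp (- (X / 2))))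
    by (apply RInt_gamma_integrand_tail; assumption).
  apply Rabs_def2 in H. lra.
Qed.

Lemma gauss_integrand_subst s k t : 0 < k -> 0 < t ->
  2 * Rpower k s * gauss_integrand (2 * s - 1) k t
  = 2 * k * t * (Rpower (k * t ^ 2) (s - 1) * exp (- (k * t ^ 2))).
Proof.
  intros Hk Ht. unfold gauss_integrand, Rpower.
  rewrite ln_mult, ln_pow by (try apply pow_lt; lra). simpl INR.
  replace (2 * k * t) with (2 * exp (ln k) * exp (ln t)) by (rewrite !exp_ln; lra).
  replace (s * ln k) with (ln k + (s - 1) * ln k) by ring.
  replace ((2 * s - 1) * ln t) with (ln t + 2 * (s - 1) * ln t) by ring.
  replace ((s - 1) * (ln k + (1 + 1) * ln t)) with ((s - 1) * ln k + 2 * (s - 1) * ln t) by ring.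
  rewrite !exp_plus. ring.
Qed.

Lemma RInt_gauss_integrand s k x y : 0 < k -> 0 < x -> x <= y ->
  RInt (gauss_integrand (2 * s - 1) k) x y
  = / (2 * Rpower k s) * RInt (gamma_integrand s) (k * x ^ 2) (k * y ^ 2).
Proof.
  intros Hk Hx Hxy.
  set (g := fun u => Rpower u (s - 1) * exp (- u)).
  assert (Hkx : 0 < k * x ^ 2) by (assert (0 < x ^ 2) by (apply pow_lt; lra); nra).
  assert (k * x ^ 2 <= k * y ^ 2) by (apply Rmult_le_compat_l; [lra | apply pow_incr; lra]).
  assert (Hsubst : RInt (fun t => 2 * k * t * g (k * t ^ 2)) x y = RInt g (k * x ^ 2) (k * y ^ 2)).
  { apply (RInt_comp g (fun t => k * t ^ 2) (fun t => 2 * k * t));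
      intros t Ht; rewrite Rmin_left, Rmax_right in Ht by lra.
    - apply continuity_pt_filterlim. apply continuity_pt_mult.
      + apply continuity_pt_Rpower. assert (0 < t ^ 2) by (apply pow_lt; lra). nra.
      + apply (continuity_pt_comp Ropp exp); [apply continuity_pt_opp, continuity_pt_id|].
        apply continuity_pt_exp.
    - split; [auto_derive; [exact I | ring]|].
      apply (ex_derive_continuous (V := R_NormedModule)). auto_derive. exact I. }
  assert (Hgamma : RInt (gamma_integrand s) (k * x ^ 2) (k * y ^ 2) = RInt g (k * x ^ 2) (k * y ^ 2)).
  { apply RInt_ext. intros u Hu. rewrite Rmin_left in Hu by lra.
    unfold gamma_integrand, g. rewrite powR_pos by lra. reflexivity. }
  assert (0 < 2 * Rpower k s) by (generalize (Rpower_pos k s); lra).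
  rewrite Hgamma, <- Hsubst.
  apply Rmult_eq_reg_l with (2 * Rpower k s); [|lra].
  rewrite <- Rmult_assoc, Rinv_r, Rmult_1_l by lra.
  change (2 * Rpower k s * RInt (gauss_integrand (2 * s - 1) k) x y)
    with (scal (2 * Rpower k s) (RInt (gauss_integrand (2 * s - 1) k) x y)).
  rewrite <- RInt_scal by (apply gauss_integrand_int; lra).
  apply RInt_ext. intros t Ht. rewrite Rmin_left, Rmax_right in Ht by lra.
  apply gauss_integrand_subst; lra.
Qed.

(** * The integral over the half-line *)

Section HalfLineIntegral.

Variables a b : R.
Hypothesis a_pos : 0 < a.
Hypothesis c_gt : -1 < a - b.

Let s := (a - b + 1) / 2.
Let k := a / 6.
Let P := / (2 * Rpower k s).

Let s_pos : 0 < s. Proof. unfold s. lra. Qed.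
Let k_pos : 0 < k. Proof. unfold k. lra. Qed.
Let P_pos : 0 < P.
Proof. apply Rinv_0_lt_compat. generalize (Rpower_pos k s). lra. Qed.
Let c_eq : a - b = 2 * s - 1. Proof. unfold s. field. Qed.
Let f_int : ex_RInt_on_pos (sin_integrand a b). Proof. apply sin_integrand_int; exact a_pos. Qed.

Lemma RInt_sin_integrand_near0_le x d : 0 < x <= d -> d <= 1 ->
  RInt (sin_integrand a b) x d <= exp (a * d ^ 4 / 120) * P * Gamma s.
Proof.
  intros Hx Hd. eapply Rle_trans.
  - apply RInt_le_scal with (g := gauss_integrand (a - b) k) (K := exp (a * d ^ 4 / 120));
      [lra | apply f_int; lra | apply gauss_integrand_int; lra |].
    intros t Ht. eapply Rle_trans; [apply sin_integrand_le_gauss; lra|].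
    rewrite Rmult_comm. apply Rmult_le_compat_r; [apply gauss_integrand_ge0; lra|].
    apply exp_le_compat. assert (t ^ 4 <= d ^ 4) by (apply pow_incr; lra). nra.
  - rewrite Rmult_assoc. apply Rmult_le_compat_l; [left; apply exp_pos|].
    rewrite c_eq, RInt_gauss_integrand by lra.
    apply Rmult_le_compat_l; [left; exact P_pos|].
    apply RInt_gamma_integrand_le_Gamma; [exact s_pos | |].
    + assert (0 < x ^ 2) by (apply pow_lt; lra). nra.
    + apply Rmult_le_compat_l; [lra | apply pow_incr; lra].
Qed.

Lemma RInt_sin_integrand_near0_ge x d : 0 < x <= d -> d <= 1 ->
  exp (- (a * d ^ 4 / 30)) * P * RInt (gamma_integrand s) (k * x ^ 2) (k * d ^ 2)
  <= RInt (sin_integrand a b) x d.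
Proof.
  intros Hx Hd. rewrite Rmult_assoc. unfold P. rewrite <- RInt_gauss_integrand, <- c_eq by lra.
  apply RInt_ge_scal; [lra | apply f_int; lra | apply gauss_integrand_int; lra |].
  intros t Ht. eapply Rle_trans; [|apply gauss_le_sin_integrand; lra].
  rewrite Rmult_comm. apply Rmult_le_compat_l; [apply gauss_integrand_ge0; lra|].
  apply exp_le_compat. assert (t ^ 4 <= d ^ 4) by (apply pow_incr; lra). nra.
Qed.

Lemma RInt_sin_integrand_mid_le d : 0 < d <= 1 ->
  RInt (sin_integrand a b) d 1 <= / d * exp (- (a * d ^ 2 / 8)).
Proof.
  intros Hd. eapply Rle_trans.
  - apply RInt_le_const with (K := / d * exp (- (a * d ^ 2 / 8))); [lra | apply f_int; lra |].
    intros t Ht. apply sin_integrand_le_mid; lra.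
  - assert (0 < / d * exp (- (a * d ^ 2 / 8))).
    { apply Rmult_lt_0_compat; [apply Rinv_0_lt_compat; lra | apply exp_pos]. }
    nra.
Qed.

Lemma RInt_sin_integrand_far_le N y : 0 <= N <= a -> a - b - N <= -2 -> 1 <= y ->
  RInt (sin_integrand a b) 1 y <= Rpower (9/10) (a - N).
Proof.
  intros HN Hc Hy. eapply Rle_trans.
  - apply RInt_le_scal with (g := fun t => / t ^ 2) (K := Rpower (9/10) (a - N));
      [lra | apply f_int; lra | apply ex_RInt_inv_sq; lra |].
    intros t Ht. apply sin_integrand_le_far; lra.
  - generalize (RInt_inv_sq_le y Hy) (Rpower_pos (9/10) (a - N)). intros. nra.
Qed.

Definition sin_integral_bound d N :=
  exp (a * d ^ 4 / 120) * P * Gamma s + / d * exp (- (a * d ^ 2 / 8)) + Rpower (9/10) (a - N).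

Lemma RInt_sin_integrand_le d N x y : 0 < d <= 1 -> 0 <= N <= a -> a - b - N <= -2 ->
  0 < x -> x <= y -> RInt (sin_integrand a b) x y <= sin_integral_bound d N.
Proof.
  intros Hd HN Hc Hx Hxy.
  set (x' := Rmin x d). set (y' := Rmax y 1).
  assert (0 < x') by (unfold x'; apply Rmin_glb_lt; lra).
  assert (x' <= x) by apply Rmin_l. assert (x' <= d) by apply Rmin_r.
  assert (y <= y') by apply Rmax_l. assert (1 <= y') by apply Rmax_r.
  eapply Rle_trans.
  { apply (RInt_le_widen _ f_int (sin_integrand_ge0 a b) x' x y y'); lra. }
  rewrite (RInt_split _ x' d y'), (RInt_split _ d 1 y') by (apply f_int; lra).
  generalize (RInt_sin_integrand_near0_le x' d ltac:(lra) ltac:(lra))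
             (RInt_sin_integrand_mid_le d Hd) (RInt_sin_integrand_far_le N y' HN Hc ltac:(lra)).
  unfold sin_integral_bound. lra.
Qed.

Lemma sin_integral_exists d N : 0 < d <= 1 -> 0 <= N <= a -> a - b - N <= -2 ->
  exists L, ImpIntRight (sin_integrand a b) 0 L.
Proof.
  intros Hd HN Hc. apply (ImpIntRight_of_bounded _ f_int (sin_integrand_ge0 a b) (sin_integral_bound d N)).
  intros x y. apply RInt_sin_integrand_le; assumption.
Qed.

Lemma ImpIntRight_sin_integrand_le d N L : 0 < d <= 1 -> 0 <= N <= a -> a - b - N <= -2 ->
  ImpIntRight (sin_integrand a b) 0 L -> L <= sin_integral_bound d N.
Proof.
  intros Hd HN Hc HL. apply (ImpIntRight_le (sin_integrand a b) L); [exact HL|].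
  intros x y. apply RInt_sin_integrand_le; assumption.
Qed.

Lemma ImpIntRight_sin_integrand_ge d n L : 0 < d <= 1 -> s - 1 <= INR n -> 1 <= k * d ^ 2 ->
  ImpIntRight (sin_integrand a b) 0 L ->
  exp (- (a * d ^ 4 / 30)) * P * (Gamma s - gamma_tail_const n * (2 * exp (- (k * d ^ 2 / 2)))) <= L.
Proof.
  intros Hd Hn Hkd HL. set (E := exp (- (a * d ^ 4 / 30))).
  assert (0 < E * P) by (apply Rmult_lt_0_compat; [apply exp_pos | exact P_pos]).
  apply Rle_plus_epsilon. intros eta Heta.
  destruct (Gamma_le_RInt_tail s n (k * d ^ 2) (eta / (E * P)) s_pos Hn Hkd) as [u0 [Hu0 Hgamma]].
  { apply Rdiv_lt_0_compat; assumption. }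
  set (x := Rmin d (u0 / (2 * (k + 1)))).
  assert (Hx : 0 < x) by (unfold x; apply Rmin_glb_lt; [lra | apply Rdiv_lt_0_compat; lra]).
  assert (Hxd : x <= d) by apply Rmin_l.
  assert (Hxu : x * (2 * (k + 1)) <= u0).
  { apply Rle_trans with (u0 / (2 * (k + 1)) * (2 * (k + 1))).
    - apply Rmult_le_compat_r; [lra | apply Rmin_r].
    - right. field. lra. }
  assert (0 < k * x ^ 2 < u0) by (split; [assert (0 < x ^ 2) by (apply pow_lt; lra); nra | simpl; nra]).
  specialize (Hgamma (k * x ^ 2) ltac:(lra) ltac:(lra)).
  assert (RInt (sin_integrand a b) x d <= L)
    by (apply (RInt_le_ImpIntRight _ f_int (sin_integrand_ge0 a b)); assumption).
  assert (E * P * RInt (gamma_integrand s) (k * x ^ 2) (k * d ^ 2) <= RInt (sin_integrand a b) x d)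
    by (apply RInt_sin_integrand_near0_ge; lra).
  assert (E * P * (Gamma s - eta / (E * P) - gamma_tail_const n * (2 * exp (- (k * d ^ 2 / 2))))
          <= E * P * RInt (gamma_integrand s) (k * x ^ 2) (k * d ^ 2))
    by (apply Rmult_le_compat_l; lra).
  assert (E * P * (eta / (E * P)) = eta) by (unfold Rdiv; rewrite Rmult_comm, Rmult_assoc, Rinv_l, Rmult_1_r by lra; reflexivity).
  nra.
Qed.

End HalfLineIntegral.

(** * Asymptotics *)

Definition half_line_main_term a b :=
  / (2 * Rpower (a / 6) ((a - b + 1) / 2)) * Gamma ((a - b + 1) / 2).

Definition geom_rate := - ln (9/10).

Lemma geom_rate_pos : 0 < geom_rate.
Proof.
  unfold geom_rate. assert (ln (9/10) < ln 1) by (apply ln_increasing; lra).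
  rewrite ln_1 in *. lra.
Qed.

Lemma Rpower_nine_tenths x : Rpower (9/10) x = exp (- (geom_rate * x)).
Proof. unfold Rpower, geom_rate. f_equal. ring. Qed.

Section Asymptotics.

Variables (M : R) (n : nat).
Hypothesis n_ge : (M + 1) / 2 - 1 <= INR n.

Definition outer_error w :=
  Rpower w (3 * ((M + 1) / 2) + 1) * exp (- (w / 8))
  + exp (geom_rate * (M + 2)) * (Rpower w (3 * ((M + 1) / 2)) * exp (- (geom_rate * w))).

(* Here alpha = w^3 and d = 1/w: the terms account for the factor exp (O (alpha d^4))
   near 0, the Gamma tail beyond k d^2 = w/6, and the contributions of [d, 1] and
   [1, oo). *)
Definition relative_error w :=
  / w / 30 + 4 * exp 2 * (gamma_tail_const n * exp (- (w / 12)) + outer_error w).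

Lemma outer_error_ge0 w : 0 <= outer_error w.
Proof.
  unfold outer_error.
  generalize (Rpower_pos w (3 * ((M + 1) / 2) + 1)) (exp_pos (- (w / 8)))
    (exp_pos (geom_rate * (M + 2))) (Rpower_pos w (3 * ((M + 1) / 2))) (exp_pos (- (geom_rate * w))).
  intros. assert (0 <= Rpower w (3 * ((M + 1) / 2)) * exp (- (geom_rate * w))) by nra. nra.
Qed.

Variables a b w : R.
Hypothesis c_range : -1 < a - b <= M.
Hypothesis a_ge : M + 2 <= a.
Hypothesis w_ge : 6 <= w.
Hypothesis a_eq : a = w ^ 3.

Let s := (a - b + 1) / 2.
Let k := a / 6.
Let P := / (2 * Rpower k s).
Let d := / w.

Let a_pos : 0 < a. Proof. rewrite a_eq. apply pow_lt. lra. Qed.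
Let w_le_a : w <= a. Proof. rewrite a_eq. simpl. nra. Qed.
Let P_pos : 0 < P. Proof. apply Rinv_0_lt_compat. generalize (Rpower_pos k s). lra. Qed.
Let Gamma_pos : 0 < Gamma s.
Proof. generalize (Gamma_ge s ltac:(unfold s; lra)) (exp_pos (-2)). lra. Qed.
Let d_range : 0 < d <= 1.
Proof.
  unfold d. split; [apply Rinv_0_lt_compat; lra|].
  rewrite <- Rinv_1. apply Rinv_le_contravar; lra.
Qed.
Let ad4 : a * d ^ 4 = / w. Proof. unfold d. rewrite a_eq. field. lra. Qed.
Let ad2 : a * d ^ 2 = w. Proof. unfold d. rewrite a_eq. field. lra. Qed.
Let kd2 : a / 6 * d ^ 2 = w / 6. Proof. unfold d. rewrite a_eq. field. lra. Qed.

Lemma one_le_half_line_main_term : 1 <= 4 * exp 2 * Rpower a ((M + 1) / 2) * half_line_main_term a b.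
Proof.
  unfold half_line_main_term. fold s k P.
  assert (Hks : Rpower k s <= Rpower a ((M + 1) / 2)).
  { apply Rle_trans with (Rpower k ((M + 1) / 2)).
    - apply Rle_Rpower; unfold k, s; lra.
    - apply Rle_Rpower_l; unfold s, k; lra. }
  assert (H := inv_Gamma_le s ltac:(unfold s; lra)).
  assert (0 < Rpower k s) by apply Rpower_pos.
  unfold P. rewrite <- (Rinv_inv (Gamma s)).
  assert (0 < / Gamma s) by (apply Rinv_0_lt_compat; exact Gamma_pos).
  apply Rmult_le_reg_r with (2 * Rpower k s * / Gamma s); [nra|].
  field_simplify; [nra | lra | lra].
Qed.

Lemma ImpIntRight_sin_integrand_ge_main L : ImpIntRight (sin_integrand a b) 0 L ->
  (1 - relative_error w) * half_line_main_term a b <= L.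
Proof.
  intros HL. unfold half_line_main_term. fold s k P.
  assert (H := ImpIntRight_sin_integrand_ge a b a_pos ltac:(lra) d n L d_range
                 ltac:(unfold s; lra) ltac:(rewrite kd2; lra) HL).
  fold s k P in H. rewrite ad4 in H.
  replace (k * d ^ 2 / 2) with (w / 12) in H by (unfold k; rewrite kd2; field).
  set (G := Gamma s) in *. set (C := gamma_tail_const n) in *.
  set (T := C * (2 * exp (- (w / 12)))) in H.
  assert (HC : 0 < C) by apply gamma_tail_const_pos.
  assert (He12 : 0 < exp (- (w / 12))) by apply exp_pos.
  assert (HT0 : 0 <= T) by (unfold T; nra).
  assert (HG : 1 <= 2 * exp 2 * G) by (apply one_le_Gamma_mul; unfold s; lra).
  assert (HT : T <= 4 * exp 2 * (C * exp (- (w / 12))) * G).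
  { replace (4 * exp 2 * (C * exp (- (w / 12))) * G) with (T * (2 * exp 2 * G)) by (unfold T; ring).
    nra. }
  assert (Hexp : G - T - / w / 30 * G <= exp (- (/ w / 30)) * (G - T)).
  { apply exp_neg_mul_ge; [assert (0 < / w) by (apply Rinv_0_lt_compat; lra) | |]; lra. }
  assert (HPL : P * (G - T - / w / 30 * G) <= L).
  { apply Rle_trans with (exp (- (/ w / 30)) * P * (G - T)); [|exact H].
    replace (exp (- (/ w / 30)) * P * (G - T)) with (P * (exp (- (/ w / 30)) * (G - T))) by ring.
    apply Rmult_le_compat_l; lra. }
  unfold relative_error. fold C.
  set (Y := 4 * exp 2 * (C * exp (- (w / 12)))) in HT.
  set (Z := 4 * exp 2 * outer_error w).
  assert (0 <= Z) by (unfold Z; generalize (exp_pos 2) (outer_error_ge0 w); nra).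
  assert (P * T <= P * (Y * G)) by (apply Rmult_le_compat_l; lra).
  assert (0 <= Z * (P * G)) by (apply Rmult_le_pos; nra).
  replace (4 * exp 2 * (C * exp (- (w / 12)) + outer_error w)) with (Y + Z) by (unfold Y, Z; ring).
  nra.
Qed.

Lemma outer_terms_le : Rpower a ((M + 1) / 2) * (w * exp (- (w / 8)) + Rpower (9/10) (a - (M + 2)))
  <= outer_error w.
Proof.
  unfold outer_error. rewrite a_eq at 1. rewrite Rpower_cube by lra.
  rewrite Rpower_plus, Rpower_1 by lra.
  assert (Hgeom : Rpower (9/10) (a - (M + 2)) <= exp (geom_rate * (M + 2)) * exp (- (geom_rate * w))).
  { rewrite Rpower_nine_tenths, <- exp_plus. apply exp_le_compat.
    generalize geom_rate_pos. nra. }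
  assert (0 < Rpower w (3 * ((M + 1) / 2))) by apply Rpower_pos.
  assert (0 < exp (- (geom_rate * w))) by apply exp_pos.
  nra.
Qed.

Lemma ImpIntRight_sin_integrand_le_main L : ImpIntRight (sin_integrand a b) 0 L ->
  L <= (1 + relative_error w) * half_line_main_term a b.
Proof.
  intros HL.
  assert (H := ImpIntRight_sin_integrand_le a b a_pos ltac:(lra) d (M + 2) L d_range
                 ltac:(lra) ltac:(lra) HL).
  assert (Hone := one_le_half_line_main_term).
  unfold sin_integral_bound, half_line_main_term in *. fold s k P in H, Hone |- *.
  rewrite ad4, ad2 in H. replace (/ d) with w in H by (unfold d; rewrite Rinv_inv; reflexivity).
  set (G := Gamma s) in *.
  assert (Hw : 0 < / w <= 1) by (generalize d_range; unfold d; lra).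
  assert (Hexp : exp (/ w / 120) <= 1 + / w / 30).
  { apply Rle_trans with (1 + 2 * (/ w / 120)); [apply exp_le_1_plus_2x|]; lra. }
  set (R := w * exp (- (w / 8)) + Rpower (9/10) (a - (M + 2))) in H.
  assert (HR := outer_terms_le). fold R in HR.
  assert (0 <= R) by (unfold R; generalize (exp_pos (- (w / 8))) (Rpower_pos (9/10) (a - (M + 2))); nra).
  assert (0 < P * G) by (apply Rmult_lt_0_compat; assumption).
  assert (HRZ : R <= 4 * exp 2 * outer_error w * (P * G)).
  { apply Rle_trans with (R * (4 * exp 2 * Rpower a ((M + 1) / 2) * (P * G))); [nra|].
    assert (0 < 4 * exp 2 * (P * G)) by (generalize (exp_pos 2); nra).
    apply Rmult_le_compat_l with (r := 4 * exp 2 * (P * G)) in HR; [|lra].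
    lra. }
  assert (0 <= 4 * exp 2 * (gamma_tail_const n * exp (- (w / 12))) * (P * G)).
  { generalize (exp_pos 2) (gamma_tail_const_pos n) (exp_pos (- (w / 12))). intros.
    apply Rmult_le_pos; [|lra]. apply Rmult_le_pos; [lra|]. apply Rmult_le_pos; lra. }
  assert (exp (/ w / 120) * P * G <= (1 + / w / 30) * (P * G)).
  { rewrite Rmult_assoc. apply Rmult_le_compat_r; lra. }
  unfold relative_error, R in *. lra.
Qed.

End Asymptotics.

Lemma I_int_split a b : 0 < a -> (exists L, ImpIntRight (sin_integrand a b) 0 L) ->
  exists l1 l2, ImpIntRight (sin_integrand a b) 0 l1 /\ ImpIntRight (sin_integrand a b) 0 l2 /\
    I_int a b = l1 + l2.
Proof.
  intros Ha [L HL].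
  assert (Heven := sin_integrand_even a b). assert (Hint := sin_integrand_int a b Ha).
  assert (Hline : exists l, ImpIntLine (sin_integrand a b) l).
  { exists (L + L), L, L. split; [|split; [exact HL | reflexivity]].
    apply ImpIntLeft_of_ImpIntRight; assumption. }
  destruct (epsilon_spec (inhabits 0) _ Hline) as [l1 [l2 [H1 [H2 H]]]].
  exists l1, l2. split; [|split; [exact H2 | exact H]].
  apply ImpIntRight_of_ImpIntLeft; assumption.
Qed.

Lemma half_line_main_term_pos a b : -1 < a - b -> 0 < half_line_main_term a b.
Proof.
  intros Hc. apply Rmult_lt_0_compat.
  - apply Rinv_0_lt_compat. generalize (Rpower_pos (a / 6) ((a - b + 1) / 2)). lra.
  - generalize (Gamma_ge ((a - b + 1) / 2) ltac:(lra)) (exp_pos (-2)). lra.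
Qed.

Lemma I_int_ratio_close M n a b w : (M + 1) / 2 - 1 <= INR n -> -1 < a - b <= M ->
  M + 2 <= a -> 6 <= w -> a = w ^ 3 ->
  Rabs (I_int a b / (Rpower (6 / a) ((a - b + 1) / 2) * Gamma ((a - b + 1) / 2)) - 1)
  <= relative_error M n w.
Proof.
  intros Hn Hc HaM Hw Ha.
  assert (a_pos : 0 < a) by lra.
  destruct (I_int_split a b a_pos) as [l1 [l2 [H1 [H2 ->]]]].
  { apply (sin_integral_exists a b a_pos ltac:(lra) 1 (M + 2)); lra. }
  rewrite Rpower_six_div, Rmult_assoc by exact a_pos. fold (half_line_main_term a b).
  assert (HQ := half_line_main_term_pos a b ltac:(lra)).
  assert (Hlo1 : (1 - relative_error M n w) * half_line_main_term a b <= l1)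
    by (eapply ImpIntRight_sin_integrand_ge_main; eassumption).
  assert (Hlo2 : (1 - relative_error M n w) * half_line_main_term a b <= l2)
    by (eapply ImpIntRight_sin_integrand_ge_main; eassumption).
  assert (Hup1 : l1 <= (1 + relative_error M n w) * half_line_main_term a b)
    by (eapply ImpIntRight_sin_integrand_le_main; eassumption).
  assert (Hup2 : l2 <= (1 + relative_error M n w) * half_line_main_term a b)
    by (eapply ImpIntRight_sin_integrand_le_main; eassumption).
  set (Q := half_line_main_term a b) in *.
  replace ((l1 + l2) / (2 * Q) - 1) with ((l1 + l2 - 2 * Q) / (2 * Q)) by (field; lra).
  unfold Rdiv. rewrite Rabs_mult, Rabs_inv, (Rabs_pos_eq (2 * Q)) by lra.
  apply Rmult_le_reg_r with (2 * Q); [lra|].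
  rewrite Rmult_assoc, Rinv_l, Rmult_1_r by lra.
  apply Rabs_le. lra.
Qed.

Lemma Rpower_mul_exp_eventually_le p r eps : 0 < r -> 0 < eps ->
  exists W, 1 <= W /\ forall w, W <= w -> Rpower w p * exp (- (r * w)) <= eps.
Proof.
  intros Hr Heps.
  destruct (nat_above (p + 1)) as [m Hm].
  set (K := INR (fact m) / r ^ m).
  assert (HK : 0 < K) by (apply Rdiv_lt_0_compat; [apply lt_0_INR, lt_O_fact | apply pow_lt; lra]).
  exists (Rmax 1 (K / eps)). split; [apply Rmax_l|].
  intros w Hw. generalize (Rmax_l 1 (K / eps)) (Rmax_r 1 (K / eps)). intros.
  assert (Hpow : Rpower w p <= w ^ m / w).
  { replace (w ^ m / w) with (Rpower w (INR m - 1)).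
    - apply Rle_Rpower; lra.
    - unfold Rminus. rewrite Rpower_plus, Rpower_pow, Rpower_Ropp, Rpower_1 by lra. reflexivity. }
  assert (Hexp := exp_neg_le_fact_div (r * w) m ltac:(nra)).
  assert (0 < w ^ m) by (apply pow_lt; lra).
  eapply Rle_trans; [apply Rmult_le_compat; [left; apply Rpower_pos | left; apply exp_pos | exact Hpow | exact Hexp]|].
  replace (w ^ m / w * (INR (fact m) / (r * w) ^ m)) with (K / w).
  2: { unfold K. rewrite Rpow_mult_distr. field. repeat split; try lra; apply pow_nonzero; lra. }
  apply Rmult_le_reg_r with (w / eps); [apply Rdiv_lt_0_compat; lra|].
  replace (K / w * (w / eps)) with (K / eps) by (field; lra).
  replace (eps * (w / eps)) with w by (field; lra). lra.
Qed.

Lemma relative_error_eventually_lt M n eps : 0 < eps ->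
  exists W, 6 <= W /\ forall w, W <= w -> relative_error M n w < eps.
Proof.
  intros Heps. set (e := eps / 5).
  assert (He : 0 < e) by (unfold e; lra).
  assert (HE : 0 < 4 * exp 2) by (generalize (exp_pos 2); lra).
  assert (HC := gamma_tail_const_pos n).
  assert (HN := exp_pos (geom_rate * (M + 2))).
  destruct (Rpower_mul_exp_eventually_le 0 (/ 12) (e / (4 * exp 2 * gamma_tail_const n)))
    as [W1 [_ HW1]]; [lra | apply Rdiv_lt_0_compat; nra |].
  destruct (Rpower_mul_exp_eventually_le (3 * ((M + 1) / 2) + 1) (/ 8) (e / (4 * exp 2)))
    as [W2 [_ HW2]]; [lra | apply Rdiv_lt_0_compat; lra |].
  destruct (Rpower_mul_exp_eventually_le (3 * ((M + 1) / 2)) geom_rate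
              (e / (4 * exp 2 * exp (geom_rate * (M + 2)))))
    as [W3 [_ HW3]]; [apply geom_rate_pos | apply Rdiv_lt_0_compat; nra |].
  exists (Rmax 6 (Rmax (/ e) (Rmax W1 (Rmax W2 W3)))). split; [apply Rmax_l|].
  intros w Hw.
  apply Rmax_le_inv in Hw as [Hw6 Hw]. apply Rmax_le_inv in Hw as [Hwe Hw].
  apply Rmax_le_inv in Hw as [Hw1 Hw]. apply Rmax_le_inv in Hw as [Hw2 Hw3].
  specialize (HW1 w Hw1). specialize (HW2 w Hw2). specialize (HW3 w Hw3).
  rewrite Rpower_O in HW1 by lra. rewrite Rmult_1_l in HW1.
  replace (/ 12 * w) with (w / 12) in HW1 by field.
  replace (/ 8 * w) with (w / 8) in HW2 by field.
  assert (H30 : / w / 30 <= e).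
  { assert (/ w <= e).
    { rewrite <- (Rinv_inv e). apply Rinv_le_contravar; [apply Rinv_0_lt_compat|]; lra. }
    assert (0 < / w) by (apply Rinv_0_lt_compat; lra). lra. }
  unfold relative_error, outer_error.
  apply Rmult_le_compat_l with (r := 4 * exp 2 * gamma_tail_const n) in HW1; [|nra].
  apply Rmult_le_compat_l with (r := 4 * exp 2) in HW2; [|lra].
  apply Rmult_le_compat_l with (r := 4 * exp 2 * exp (geom_rate * (M + 2))) in HW3; [|nra].
  replace (4 * exp 2 * gamma_tail_const n * (e / (4 * exp 2 * gamma_tail_const n))) with e
    in HW1 by (field; lra).
  replace (4 * exp 2 * (e / (4 * exp 2))) with e in HW2 by (field; lra).
  replace (4 * exp 2 * exp (geom_rate * (M + 2)) * (e / (4 * exp 2 * exp (geom_rate * (M + 2)))))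
    with e in HW3 by (field; lra).
  unfold e in *. lra.
Qed.

Lemma I_int_equiv (beta : R -> R) (M : R) :
  (exists A, forall alpha, A < alpha -> -1 < alpha - beta alpha /\ alpha - beta alpha <= M) ->
  equiv_at_infty
    (fun alpha => I_int alpha (beta alpha))
    (fun alpha => Rpower (6 / alpha) ((alpha - beta alpha + 1) / 2)
                  * Gamma ((alpha - beta alpha + 1) / 2)).
Proof.
  intros [A Hbeta] eps Heps.
  destruct (nat_above ((M + 1) / 2 - 1)) as [n Hn].
  destruct (relative_error_eventually_lt M n eps Heps) as [W [HW6 HW]].
  exists (Rmax A (Rmax (M + 2) (W ^ 3))). intros alpha Halpha.
  apply Rmax_Rlt in Halpha as [HA Halpha]. apply Rmax_Rlt in Halpha as [HM HW3].
  assert (Hpos : 0 < alpha) by (generalize (pow_lt W 3 ltac:(lra)); lra).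
  set (w := Rpower alpha (/ 3)).
  assert (Hw : alpha = w ^ 3) by (symmetry; apply Rpower_third_cube; exact Hpos).
  assert (HWw : W <= w).
  { apply Rnot_lt_le. intro Hlt. assert (w ^ 3 <= W ^ 3); [|lra].
    apply pow_incr. split; [left; apply Rpower_pos | lra]. }
  apply Rle_lt_trans with (relative_error M n w); [|apply HW; exact HWw].
  apply I_int_ratio_close; [exact Hn | apply Hbeta; exact HA | lra | lra | exact Hw].
Qed.

Theorem mainTheorem6 :
  (forall (beta : R -> R) (M : R),
     (exists A, forall alpha, A < alpha ->
        -1 < alpha - beta alpha /\ alpha - beta alpha <= M) ->
     equiv_at_infty
       (fun alpha => I_int alpha (beta alpha))
       (fun alpha => Rpower (6 / alpha) ((alpha - beta alpha + 1) / 2)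
                     * Gamma ((alpha - beta alpha + 1) / 2)))
  /\
  equiv_at_infty
    (fun alpha => I_int alpha (IZR (Int_part alpha)))
    (fun alpha => Rpower (6 / alpha) ((alpha - IZR (Int_part alpha) + 1) / 2)
                  * Gamma ((alpha - IZR (Int_part alpha) + 1) / 2)).
Proof.
  split.
  - exact I_int_equiv.
  - apply (I_int_equiv (fun alpha => IZR (Int_part alpha)) 1).
    exists 0. intros alpha _. destruct (base_Int_part alpha). lra.
Qed.
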